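(* Consider the local public good game described in the context and suppose $\gamma_i'(W)\in(0,1)$ for all $i\in N$ and all $W$, and that a sociable Nash equilibrium $(x^*,y^*,g^* )$ with non-empty $g^*$ exists. Then the efficient solution can be implemented as a Nash equilibrium by fixing a personalized price of the public good $p_x\in(0,1)$ for the hub $h$ of the efficient star, financed by lump-sum taxes $\tau_1,\dots,\tau_n$ levied on players, with $\sum_i\tau_i=(1-p_x)x_h$.
   Context: There is a finite set of players $N=\{1,\dots,n\}$. Each player $i$ chooses a public good provision $x_i\ge 0$, a private good consumption $y_i\ge 0$, and links $g_i\in\{0,1\}^n$ with $g_{ii}=0$; $g_{ij}=1$ means $i$ links to $j$. Let $\eta_i(g)=|\{j:g_{ij}=1\}|$. Each link costs its sponsor $k>0$. Player $i$'s public good consumption is $\bar x_i=x_i+\sum_jg_{ij}x_j$. Player $i$ maximizes $U_i(\bar x_i,y_i)$ subject to $x_i+p_iy_i+\eta_i(g)k=w_i$, where $w_i>0$, $p_i>0$, and $U_i$ is twice continuously differentiable, strictly concave and increasing in both arguments. The Engel curve $\gamma_i$ gives, for income $W$, the public good consumption maximizing $U_i(\bar x,y)$ subject to $\bar x+p_iy=W$; it is continuously differentiable. A Nash equilibrium is a profile in which each player's strategy solves her maximization problem given the others'; it is sociable if any player who is indifferent between establishing a link or not establishes it. The efficient solution maximizes $\sum_iU_i(\bar x_i,y_i)$ subject to $\sum_i(x_i+p_iy_i+\eta_i(g)k)\le\sum_iw_i$; its network is empty or a star (a hub $h$ to which other connected players link) in which only the hub provides the public good, possibly with isolated players. Under the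 policy, the hub's budget becomes $p_xx_h+p_hy_h+\eta_h(g)k=w_h-\tau_h$ and every other player's becomes $x_i+p_iy_i+\eta_i(g)k=w_i-\tau_i$. *)

From Stdlib Require Import Reals Lra List.
From Coquelicot Require Import Coquelicot.
Open Scope R_scope.

(** Players are the naturals 0, ..., n-1. *)

Definition sumN (n : nat) (f : nat -> R) : R :=
  fold_right Rplus 0 (map f (List.seq 0 n)).

Definition nlinks (n : nat) (gi : nat -> bool) : R :=
  sumN n (fun j => if gi j then 1 else 0).

Definition util (n : nat) (U : nat -> R -> R -> R) (x : nat -> R) (i : nat)
    (xi yi : R) (gi : nat -> bool) : R :=
  U i (xi + sumN n (fun j => if gi j then x j else 0)) yi.

(** Feasible strategy of player i for the budget
      c_i * x_i + p_i * y_i + eta_i(g) * k = m_i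
    (original game: c_i = 1, m_i = w_i; policy: c_h = p_x, m_i = w_i - tau_i). *)
Definition feasible (n : nat) (p : nat -> R) (k : R) (c m : nat -> R) (i : nat)
    (xi yi : R) (gi : nat -> bool) : Prop :=
  0 <= xi /\ 0 <= yi /\ gi i = false /\
  c i * xi + p i * yi + nlinks n gi * k = m i.

Definition is_NE (n : nat) (U : nat -> R -> R -> R) (p : nat -> R) (k : R)
    (c m : nat -> R) (x y : nat -> R) (g : nat -> nat -> bool) : Prop :=
  forall i, (i < n)%nat ->
    feasible n p k c m i (x i) (y i) (g i) /\
    forall xi yi gi, feasible n p k c m i xi yi gi ->
      util n U x i xi yi gi <= util n U x i (x i) (y i) (g i).

(** Sociable Nash equilibrium: a player who is indifferent between establishing
    a link or not establishes it; i.e. if g_ij = 0 then no feasible strategy of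
    i containing the link ij does as well as her equilibrium strategy. *)
Definition is_sociable_NE (n : nat) (U : nat -> R -> R -> R) (p : nat -> R) (k : R)
    (c m : nat -> R) (x y : nat -> R) (g : nat -> nat -> bool) : Prop :=
  is_NE n U p k c m x y g /\
  forall i j, (i < n)%nat -> (j < n)%nat -> j <> i -> g i j = false ->
    forall xi yi gi, feasible n p k c m i xi yi gi -> gi j = true ->
      util n U x i xi yi gi < util n U x i (x i) (y i) (g i).

Definition admissible (n : nat) (x y : nat -> R) (g : nat -> nat -> bool) : Prop :=
  forall i, (i < n)%nat -> 0 <= x i /\ 0 <= y i /\ g i i = false.

Definition agg_feasible (n : nat) (p w : nat -> R) (k : R)
    (x y : nat -> R) (g : nat -> nat -> bool) : Prop :=
  sumN n (fun i => x i + p i * y i + nlinks n (g i) * k) <= sumN n w.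

Definition welfare (n : nat) (U : nat -> R -> R -> R) (x y : nat -> R)
    (g : nat -> nat -> bool) : R :=
  sumN n (fun i => util n U x i (x i) (y i) (g i)).

Definition is_efficient (n : nat) (U : nat -> R -> R -> R) (p w : nat -> R) (k : R)
    (x y : nat -> R) (g : nat -> nat -> bool) : Prop :=
  admissible n x y g /\ agg_feasible n p w k x y g /\
  forall x' y' g', admissible n x' y' g' -> agg_feasible n p w k x' y' g' ->
    welfare n U x' y' g' <= welfare n U x y g.

Definition nonempty_net (n : nat) (g : nat -> nat -> bool) : Prop :=
  exists i j, (i < n)%nat /\ (j < n)%nat /\ g i j = true.

Definition star_hub (n : nat) (g : nat -> nat -> bool) (h : nat) : Prop :=
  (h < n)%nat /\
  (exists i, (i < n)%nat /\ g i h = true) /\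
  (forall i j, (i < n)%nat -> (j < n)%nat -> g i j = true -> j = h).

Definition D1 (f : R -> R -> R) : R -> R -> R := fun s t => Derive (fun u => f u t) s.
Definition D2 (f : R -> R -> R) : R -> R -> R := fun s t => Derive (fun u => f s u) t.

Definition has_partials (f : R -> R -> R) (a b : R) : Prop :=
  ex_derive (fun u => f u b) a /\ ex_derive (fun u => f a u) b.

Definition cont2 (f : R -> R -> R) (a b : R) : Prop :=
  continuous (fun z : R * R => f (fst z) (snd z)) (a, b).

Definition C2_pos (f : R -> R -> R) : Prop :=
  forall a b, 0 < a -> 0 < b ->
    has_partials f a b /\ has_partials (D1 f) a b /\ has_partials (D2 f) a b /\
    cont2 f a b /\ cont2 (D1 f) a b /\ cont2 (D2 f) a b /\
    cont2 (D1 (D1 f)) a b /\ cont2 (D2 (D1 f)) a b /\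
    cont2 (D1 (D2 f)) a b /\ cont2 (D2 (D2 f)) a b.

Definition strictly_concave (f : R -> R -> R) : Prop :=
  forall a b c d t, 0 <= a -> 0 <= b -> 0 <= c -> 0 <= d -> (a, b) <> (c, d) ->
    0 < t < 1 ->
    t * f a b + (1 - t) * f c d < f (t * a + (1 - t) * c) (t * b + (1 - t) * d).

Definition increasing2 (f : R -> R -> R) : Prop :=
  (forall a a' b, 0 <= a -> a < a' -> 0 <= b -> f a b < f a' b) /\
  (forall a b b', 0 <= a -> 0 <= b -> b < b' -> f a b < f a b').

Definition is_engel (f : R -> R -> R) (q : R) (gam : R -> R) : Prop :=
  forall W, 0 < W ->
    0 <= gam W /\ gam W <= W /\
    forall xb yb, 0 <= xb -> 0 <= yb -> xb + q * yb = W ->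
      f xb yb <= f (gam W) ((W - gam W) / q).

Definition C1_slope01 (gam : R -> R) : Prop :=
  exists dgam : R -> R,
    forall W, 0 < W ->
      is_derive gam W (dgam W) /\ continuous dgam W /\ 0 < dgam W < 1.

(* Take lump-sum taxes that make every budget bind at the efficient profile.  A player other
   than the hub then faces her original budget, and no deviation of hers can pay: nobody links
   to her, so it would raise welfare.  The hub instead ignores the spillover of her provision on
   the spokes.  By efficiency, moving along the aggregate budget line (x_h + t, y_h - t / p_h)
   costs the hub at least a fixed multiple of t for small t > 0 and gains her at most a multiple
   of |t| for t < 0; hence her convex upper contour set at (x_h, y_h) is supported by a line of
   slope -p_x / p_h with 0 < p_x < 1, found as a supremum of the prices at which buying more
   would still pay.  Efficiency also forces every other player to provide at most k, so a link
   never brings the hub more than it costs, and at the price p_x her budget line stays below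
   the supporting line. *)
From Stdlib Require Import Reals Lra Lia List.
From Coquelicot Require Import Coquelicot.
Open Scope R_scope.

Lemma sumN_S n f : sumN (S n) f = sumN n f + f n.
Proof.
  unfold sumN. rewrite seq_S, map_app, fold_right_app. simpl.
  induction (map f (List.seq 0 n)); simpl; lra.
Qed.

Lemma sumN_ext n f f' : (forall i, (i < n)%nat -> f i = f' i) -> sumN n f = sumN n f'.
Proof.
  induction n as [|n IH]; intros Hff'; [reflexivity|].
  rewrite !sumN_S, IH, Hff'; auto; lia.
Qed.

Lemma sumN_le n f f' : (forall i, (i < n)%nat -> f i <= f' i) -> sumN n f <= sumN n f'.
Proof.
  induction n as [|n IH]; intros Hff'; [unfold sumN; simpl; lra|].
  rewrite !sumN_S. assert (f n <= f' n) by (apply Hff'; lia).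
  assert (sumN n f <= sumN n f') by (apply IH; intros; apply Hff'; lia). lra.
Qed.

Lemma sumN_lt n f f' i : (forall j, (j < n)%nat -> f j <= f' j) -> (i < n)%nat -> f i < f' i ->
  sumN n f < sumN n f'.
Proof.
  induction n as [|n IH]; intros Hff' Hi Hlt; [lia|]. rewrite !sumN_S.
  assert (f n <= f' n) by (apply Hff'; lia).
  destruct (Nat.eq_dec i n) as [->|Hin].
  - assert (sumN n f <= sumN n f') by (apply sumN_le; intros; apply Hff'; lia). lra.
  - assert (sumN n f < sumN n f') by (apply IH; [intros; apply Hff'; lia | lia | exact Hlt]). lra.
Qed.

Lemma sumN_plus n f f' : sumN n (fun i => f i + f' i) = sumN n f + sumN n f'.
Proof. induction n as [|n IH]; [unfold sumN; simpl; lra|]. rewrite !sumN_S, IH. lra. Qed.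

Lemma sumN_minus n f f' : sumN n (fun i => f i - f' i) = sumN n f - sumN n f'.
Proof. induction n as [|n IH]; [unfold sumN; simpl; lra|]. rewrite !sumN_S, IH. lra. Qed.

Lemma sumN_scal n c f : sumN n (fun i => c * f i) = c * sumN n f.
Proof. induction n as [|n IH]; [unfold sumN; simpl; lra|]. rewrite !sumN_S, IH. lra. Qed.

Lemma sumN_zero n f : (forall i, (i < n)%nat -> f i = 0) -> sumN n f = 0.
Proof.
  induction n as [|n IH]; intros Hzero; [reflexivity|].
  rewrite sumN_S, IH, Hzero; auto; lra || lia.
Qed.

Lemma sumN_single n f i : (i < n)%nat -> (forall j, (j < n)%nat -> j <> i -> f j = 0) ->
  sumN n f = f i.
Proof.
  induction n as [|n IH]; intros Hi Hzero; [lia|]. rewrite sumN_S.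
  destruct (Nat.eq_dec i n) as [->|Hin].
  - rewrite sumN_zero; [lra|]. intros j Hj. apply Hzero; lia.
  - rewrite IH, (Hzero n); auto; lia || lra.
Qed.

Lemma sumN_update n f f' i : (i < n)%nat -> (forall j, (j < n)%nat -> j <> i -> f' j = f j) ->
  sumN n f' = sumN n f + (f' i - f i).
Proof.
  intros Hi Hoff.
  rewrite <- (sumN_single n (fun j => f' j - f j) i Hi), sumN_minus; [lra|].
  intros j Hj Hji. rewrite Hoff; auto; lra.
Qed.

Lemma sumN_update2 n f f' i j : (i < n)%nat -> (j < n)%nat -> i <> j ->
  (forall l, (l < n)%nat -> l <> i -> l <> j -> f' l = f l) ->
  sumN n f' = sumN n f + (f' i - f i) + (f' j - f j).
Proof.
  intros Hi Hj Hij Hoff.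
  set (fi := fun l => if Nat.eqb l i then f' l else f l).
  rewrite (sumN_update n fi f' j Hj), (sumN_update n f fi i Hi); unfold fi.
  - rewrite Nat.eqb_refl. destruct (Nat.eqb_spec j i); [lia|]. lra.
  - intros l _ Hli. destruct (Nat.eqb_spec l i); [lia|reflexivity].
  - intros l Hl Hlj. destruct (Nat.eqb_spec l i) as [->|Hli]; auto.
Qed.

Section ConcaveIncreasing.

Variable f : R -> R -> R.
Hypothesis f_concave : strictly_concave f.
Hypothesis f_increasing : increasing2 f.

Lemma concave_comb a1 b1 a2 b2 l :
  0 <= a1 -> 0 <= b1 -> 0 <= a2 -> 0 <= b2 -> 0 <= l <= 1 ->
  l * f a1 b1 + (1 - l) * f a2 b2 <= f (l * a1 + (1 - l) * a2) (l * b1 + (1 - l) * b2).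
Proof.
  intros Ha1 Hb1 Ha2 Hb2 Hl.
  destruct (Req_dec l 0) as [->|Hl0].
  { replace (0 * a1 + (1 - 0) * a2) with a2 by ring.
    replace (0 * b1 + (1 - 0) * b2) with b2 by ring. lra. }
  destruct (Req_dec l 1) as [->|Hl1].
  { replace (1 * a1 + (1 - 1) * a2) with a1 by ring.
    replace (1 * b1 + (1 - 1) * b2) with b1 by ring. lra. }
  destruct (Req_dec a1 a2) as [<-|Ha]; [destruct (Req_dec b1 b2) as [<-|Hb]|].
  - replace (l * a1 + (1 - l) * a1) with a1 by ring.
    replace (l * b1 + (1 - l) * b1) with b1 by ring. lra.
  - apply Rlt_le, f_concave; auto; [congruence|lra].
  - apply Rlt_le, f_concave; auto; [congruence|lra].
Qed.

Lemma concave_midpoint a1 b1 a2 b2 : 0 <= a1 -> 0 <= b1 -> 0 <= a2 -> 0 <= b2 ->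
  f a1 b1 + f a2 b2 <= 2 * f ((a1 + a2) / 2) ((b1 + b2) / 2).
Proof.
  intros Ha1 Hb1 Ha2 Hb2.
  pose proof (concave_comb a1 b1 a2 b2 (1/2) Ha1 Hb1 Ha2 Hb2 ltac:(lra)) as Hmid.
  replace (1 / 2 * a1 + (1 - 1 / 2) * a2) with ((a1 + a2) / 2) in Hmid by field.
  replace (1 / 2 * b1 + (1 - 1 / 2) * b2) with ((b1 + b2) / 2) in Hmid by field.
  lra.
Qed.

Lemma concave_secant_left a b r : 0 < a -> 0 <= b -> 0 <= r <= a ->
  f a b - r * ((f a b - f 0 b) / a) <= f (a - r) b.
Proof.
  intros Ha Hb Hr.
  assert (Hra : r / a * a = r) by (field; lra).
  pose proof (concave_comb 0 b a b (r / a) ltac:(lra) Hb ltac:(lra) Hb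
    ltac:(split; [apply Rdiv_le_0_compat; lra | nra])) as Hcomb.
  replace (r / a * 0 + (1 - r / a) * a) with (a - r) in Hcomb by (field; lra).
  replace (r / a * b + (1 - r / a) * b) with b in Hcomb by ring.
  replace (f a b - r * ((f a b - f 0 b) / a)) with (r / a * f 0 b + (1 - r / a) * f a b)
    by (field; lra).
  exact Hcomb.
Qed.

Lemma concave_secant_right a b r : 0 < a -> 0 <= b -> 0 <= r <= a ->
  f a b + r * ((f (2 * a) b - f a b) / a) <= f (a + r) b.
Proof.
  intros Ha Hb Hr.
  assert (Hra : r / a * a = r) by (field; lra).
  pose proof (concave_comb (2 * a) b a b (r / a) ltac:(lra) Hb ltac:(lra) Hb
    ltac:(split; [apply Rdiv_le_0_compat; lra | nra])) as Hcomb.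
  replace (r / a * (2 * a) + (1 - r / a) * a) with (a + r) in Hcomb by (field; lra).
  replace (r / a * b + (1 - r / a) * b) with b in Hcomb by ring.
  replace (f a b + r * ((f (2 * a) b - f a b) / a)) with (r / a * f (2 * a) b + (1 - r / a) * f a b)
    by (field; lra).
  exact Hcomb.
Qed.

Lemma increasing_x_le a a' b : 0 <= a -> a <= a' -> 0 <= b -> f a b <= f a' b.
Proof.
  intros Ha Haa' Hb. destruct (Req_dec a a') as [<-|Hne]; [lra|].
  apply Rlt_le, (proj1 f_increasing); auto; lra.
Qed.

Lemma increasing_y_le a b b' : 0 <= a -> 0 <= b -> b <= b' -> f a b <= f a b'.
Proof.
  intros Ha Hb Hbb'. destruct (Req_dec b b') as [<-|Hne]; [lra|].
  apply Rlt_le, (proj2 f_increasing); auto; lra.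
Qed.

(* Along the chord to [(X, 0)], [f X] stays above [c] near [y0]. *)
Lemma concave_lower_left X y0 c : 0 <= X -> 0 < y0 -> c < f X y0 ->
  exists d, 0 < d <= y0 /\ c < f X (y0 - d).
Proof.
  intros HX Hy0 Hc.
  set (e := f X y0 - c). set (D := f X y0 - f X 0).
  assert (He : 0 < e) by (unfold e; lra).
  assert (HD : 0 <= D) by (unfold D; assert (f X 0 <= f X y0) by (apply increasing_y_le; lra); lra).
  set (r := e / (2 * (e + D))).
  assert (Hr : r * (2 * (e + D)) = e) by (unfold r; field; lra).
  assert (Hr0 : 0 < r) by (unfold r; apply Rdiv_lt_0_compat; lra).
  assert (Hr1 : r <= 1) by nra.
  exists (r * y0). split; [split; nra|].
  pose proof (concave_comb X 0 X y0 r HX ltac:(lra) HX ltac:(lra) ltac:(lra)) as Hchord.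
  replace (r * X + (1 - r) * X) with X in Hchord by ring.
  replace (r * 0 + (1 - r) * y0) with (y0 - r * y0) in Hchord by ring.
  assert (r * D < e) by nra. unfold D, e in *. lra.
Qed.

End ConcaveIncreasing.

Section SupportingPrice.

Variable f : R -> R -> R.
Variables a b p : R.
Hypothesis f_concave : strictly_concave f.
Hypothesis f_increasing : increasing2 f.
Hypothesis a_pos : 0 < a.
Hypothesis b_nonneg : 0 <= b.
Hypothesis p_pos : 0 < p.

Definition gains_up q :=
  exists t, 0 < t /\ 0 <= b - q * t / p /\ f a b < f (a + t) (b - q * t / p).

Definition gains_down q :=
  exists t, 0 < t /\ t <= a /\ f a b < f (a - t) (b + q * t / p).

Definition price_supports q :=
  forall t, 0 <= a + t -> 0 <= b - q * t / p -> f (a + t) (b - q * t / p) <= f a b.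

Lemma gains_up_antitone q q' : q' <= q -> gains_up q -> gains_up q'.
Proof.
  intros Hq (t & Ht & Hy & Hgain). exists t.
  assert (Hyy' : b - q * t / p <= b - q' * t / p).
  { enough (q' * t / p <= q * t / p) by lra.
    apply Rmult_le_compat_r; [apply Rlt_le, Rinv_0_lt_compat; lra | nra]. }
  repeat split; [lra | lra |].
  eapply Rlt_le_trans; [exact Hgain | apply increasing_y_le; auto; lra].
Qed.

Lemma gains_down_monotone q q' : 0 <= q -> q <= q' -> gains_down q -> gains_down q'.
Proof.
  intros Hq Hqq' (t & Ht & Hta & Hgain). exists t.
  assert (Hy : 0 <= q * t / p) by (apply Rdiv_le_0_compat; nra).
  assert (Hyy' : q * t / p <= q' * t / p).
  { apply Rmult_le_compat_r; [apply Rlt_le, Rinv_0_lt_compat; lra | nra]. }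
  repeat split; [lra | lra |].
  eapply Rlt_le_trans; [exact Hgain | apply increasing_y_le; auto; lra].
Qed.

(* [(a, b)] is a convex combination of the two improving points. *)
Lemma gains_up_down_disjoint q : 0 <= q -> gains_up q -> gains_down q -> False.
Proof.
  intros Hq (t1 & Ht1 & Hy1 & Hgain1) (t2 & Ht2 & Ht2a & Hgain2).
  set (l := t2 / (t1 + t2)).
  assert (Hl : 0 < l < 1).
  { assert (Hlt : l * (t1 + t2) = t2) by (unfold l; field; lra).
    split; [unfold l; apply Rdiv_lt_0_compat|]; nra. }
  assert (0 <= q * t2 / p) by (apply Rdiv_le_0_compat; nra).
  pose proof (concave_comb f f_concave (a + t1) (b - q * t1 / p) (a - t2) (b + q * t2 / p) l
    ltac:(lra) Hy1 ltac:(lra) ltac:(lra) ltac:(lra)) as Hcomb.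
  replace (l * (a + t1) + (1 - l) * (a - t2)) with a in Hcomb by (unfold l; field; lra).
  replace (l * (b - q * t1 / p) + (1 - l) * (b + q * t2 / p)) with b in Hcomb
    by (unfold l; field; lra).
  nra.
Qed.

Lemma gains_up_shrink q t s : 0 < t -> 0 <= b - q * t / p -> f a b < f (a + t) (b - q * t / p) ->
  0 < s <= t -> 0 <= b - q * s / p /\ f a b < f (a + s) (b - q * s / p).
Proof.
  intros Ht Hy Hgain Hs.
  set (l := s / t).
  assert (Hl : 0 < l <= 1).
  { assert (Hlt : l * t = s) by (unfold l; field; lra).
    split; [unfold l; apply Rdiv_lt_0_compat|]; nra. }
  assert (Hys : b - q * s / p = l * (b - q * t / p) + (1 - l) * b) by (unfold l; field; lra).
  split; [rewrite Hys; nra|].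
  pose proof (concave_comb f f_concave (a + t) (b - q * t / p) a b l
    ltac:(lra) Hy ltac:(lra) b_nonneg ltac:(lra)) as Hcomb.
  replace (l * (a + t) + (1 - l) * a) with (a + s) in Hcomb by (unfold l; field; lra).
  rewrite <- Hys in Hcomb. nra.
Qed.

Lemma gains_up_open q : 0 < q -> gains_up q -> exists e, 0 < e /\ gains_up (q + e).
Proof.
  intros Hq (t & Ht & Hy & Hgain).
  destruct (gains_up_shrink q t (t / 2) Ht Hy Hgain ltac:(lra)) as [_ Hgain2].
  set (y0 := b - q * (t / 2) / p).
  assert (Hy0 : 0 < y0).
  { assert (0 < q * (t / 2) / p) by (apply Rdiv_lt_0_compat; nra).
    replace y0 with (b - q * t / p + q * (t / 2) / p) by (unfold y0; field; lra). lra. }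
  destruct (concave_lower_left f f_concave f_increasing (a + t / 2) y0 (f a b) ltac:(lra) Hy0 Hgain2)
    as (d & Hd & Hgain3).
  exists (d * p / (t / 2)). split; [apply Rdiv_lt_0_compat; nra|].
  exists (t / 2).
  replace (b - (q + d * p / (t / 2)) * (t / 2) / p) with (y0 - d) by (unfold y0; field; lra).
  repeat split; lra.
Qed.

Lemma gains_down_open q : 0 < q -> gains_down q -> exists e, 0 < e <= q / 2 /\ gains_down (q - e).
Proof.
  intros Hq (t & Ht & Hta & Hgain).
  set (y0 := b + q * t / p).
  assert (Hy0 : 0 < y0) by (unfold y0; assert (0 < q * t / p) by (apply Rdiv_lt_0_compat; nra); lra).
  destruct (concave_lower_left f f_concave f_increasing (a - t) y0 (f a b) ltac:(lra) Hy0 Hgain)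
    as (d & Hd & Hgain2).
  set (e := Rmin (d * p / t) (q / 2)).
  assert (He : 0 < e) by (apply Rmin_glb_lt; [apply Rdiv_lt_0_compat; nra | lra]).
  assert (Hed : e * t / p <= d).
  { assert (e <= d * p / t) by apply Rmin_l.
    replace d with (d * p / t * t / p) by (field; lra).
    unfold Rdiv. apply Rmult_le_compat_r; [apply Rlt_le, Rinv_0_lt_compat; lra|].
    apply Rmult_le_compat_r; lra. }
  exists e. split; [split; [lra | apply Rmin_r]|].
  exists t. repeat split; [lra | lra |].
  replace (b + (q - e) * t / p) with (y0 - e * t / p) by (unfold y0; field; lra).
  eapply Rlt_le_trans; [exact Hgain2 | apply increasing_y_le; auto; lra].
Qed.

(* An improving point [(a + s, b - q s / p)] and [(a - (1 - q) s, b)] have their midpoint on the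
   line of price [1], where [f] drops at rate [g0]; on the horizontal line [f] drops at most at the
   secant slope [m] towards [(0, b)].  Hence no improvement once [q (g0 + m) >= m]. *)
Lemma no_gains_up_near_one T g0 : 0 < T -> 0 < g0 ->
  (forall t, 0 < t -> t <= T -> 0 <= b - t / p -> f (a + t) (b - t / p) <= f a b - t * g0) ->
  exists qA, qA < 1 /\ forall q, qA <= q -> ~ gains_up q.
Proof.
  intros HT Hg0 Hloss.
  set (m := (f a b - f 0 b) / a).
  assert (Hm : 0 < m).
  { unfold m. apply Rdiv_lt_0_compat; [|lra].
    assert (f 0 b < f a b) by (apply (proj1 f_increasing); lra). lra. }
  set (qA := m / (g0 + m)).
  assert (HqA : qA * (g0 + m) = m) by (unfold qA; field; lra).
  assert (Hno : forall q, qA <= q <= 1 -> ~ gains_up q).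
  { intros q Hq (t & Ht & Hy & Hgain).
    assert (HqA0 : 0 < qA) by (unfold qA; apply Rdiv_lt_0_compat; lra).
    set (s := Rmin t (Rmin a T)).
    assert (Hs : 0 < s) by (apply Rmin_glb_lt; [|apply Rmin_glb_lt]; lra).
    assert (Hst : s <= t) by apply Rmin_l.
    assert (Hsa : s <= a) by (eapply Rle_trans; [apply Rmin_r | apply Rmin_l]).
    assert (HsT : s <= T) by (eapply Rle_trans; [apply Rmin_r | apply Rmin_r]).
    destruct (gains_up_shrink q t s Ht Hy Hgain ltac:(lra)) as [Hys Hgains].
    assert (Hqs : 0 <= q * s / p) by (apply Rdiv_le_0_compat; nra).
    pose proof (Hloss (q * s / 2) ltac:(nra) ltac:(nra)) as Hmid.
    replace (b - q * s / 2 / p) with (b - q * s / p / 2) in Hmid by (field; lra).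
    specialize (Hmid ltac:(lra)).
    pose proof (concave_secant_left f f_concave a b ((1 - q) * s) a_pos b_nonneg
      ltac:(split; nra)) as Hsec. fold m in Hsec.
    pose proof (concave_midpoint f f_concave (a + s) (b - q * s / p) (a - (1 - q) * s) b
      ltac:(lra) Hys ltac:(nra) b_nonneg) as Hmp.
    replace ((a + s + (a - (1 - q) * s)) / 2) with (a + q * s / 2) in Hmp by field.
    replace ((b - q * s / p + b) / 2) with (b - q * s / p / 2) in Hmp by (field; lra).
    assert (m <= q * (g0 + m)) by nra.
    nra. }
  exists qA. split; [nra|].
  intros q Hq Hgain. destruct (Rle_dec q 1) as [Hq1|Hq1].
  - exact (Hno q (conj Hq Hq1) Hgain).
  - apply (Hno 1); [nra|]. apply (gains_up_antitone q); [lra | exact Hgain].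
Qed.

(* Symmetric to [no_gains_up_near_one]: the midpoint of [(a - t, b + q t / p)] and
   [(a + (1 - q) t, b)] lies on the line of price [1], where [f] gains at most at rate [C],
   while [f] grows at least at the secant slope [m] towards [(2 a, b)]. *)
Lemma no_gains_down_near_zero C : 0 <= C ->
  (forall t, 0 < t -> t <= a -> f (a - t) (b + t / p) <= f a b + t * C) ->
  exists qB, 0 < qB <= 1 / 2 /\ forall q, 0 < q -> q <= qB -> ~ gains_down q.
Proof.
  intros HC Hgainbd.
  set (m := (f (2 * a) b - f a b) / a).
  assert (Hm : 0 < m).
  { unfold m. apply Rdiv_lt_0_compat; [|lra].
    assert (f a b < f (2 * a) b) by (apply (proj1 f_increasing); lra). lra. }
  set (qB := m / (2 * (C + m))).
  assert (HqB : qB * (2 * (C + m)) = m) by (unfold qB; field; lra).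
  assert (HqB0 : 0 < qB) by (unfold qB; apply Rdiv_lt_0_compat; lra).
  assert (HqB1 : qB <= 1 / 2) by nra.
  exists qB. split; [lra|].
  intros q Hq HqqB (t & Ht & Hta & Hgain).
  assert (Hqt : 0 <= q * t / p) by (apply Rdiv_le_0_compat; nra).
  pose proof (Hgainbd (q * t / 2) ltac:(nra) ltac:(nra)) as Hmid.
  replace (b + q * t / 2 / p) with (b + q * t / p / 2) in Hmid by (field; lra).
  pose proof (concave_secant_right f f_concave a b ((1 - q) * t) a_pos b_nonneg
    ltac:(split; nra)) as Hsec. fold m in Hsec.
  pose proof (concave_midpoint f f_concave (a - t) (b + q * t / p) (a + (1 - q) * t) b
    ltac:(lra) ltac:(lra) ltac:(nra) b_nonneg) as Hmp.
  replace ((a - t + (a + (1 - q) * t)) / 2) with (a - q * t / 2) in Hmp by field.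
  replace ((b + q * t / p + b) / 2) with (b + q * t / p / 2) in Hmp by (field; lra).
  assert (q * (C + m) <= m / 2) by nra.
  nra.
Qed.

Lemma price_supports_of_no_gains q : ~ gains_up q -> ~ gains_down q -> price_supports q.
Proof.
  intros Hup Hdown t Hat Hy.
  destruct (Rle_lt_dec (f (a + t) (b - q * t / p)) (f a b)) as [Hle|Hgt]; [exact Hle|].
  exfalso. destruct (Rlt_le_dec 0 t) as [Ht|Ht].
  - apply Hup. exists t. auto.
  - destruct (Req_dec t 0) as [->|Ht0].
    + replace (a + 0) with a in Hgt by ring. replace (b - q * 0 / p) with b in Hgt by (field; lra).
      lra.
    + apply Hdown. exists (- t). repeat split; [lra | lra |].
      replace (a - - t) with (a + t) by ring.
      replace (b + q * - t / p) with (b - q * t / p) by (field; lra). exact Hgt.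
Qed.

(* The price is the supremum of the prices [q] at which buying more still pays, together with
   the small prices [q <= qB]; openness of both improving sets keeps it out of either. *)
Lemma supporting_price_exists T g0 C : 0 < T -> 0 < g0 -> 0 <= C ->
  (forall t, 0 < t -> t <= T -> 0 <= b - t / p -> f (a + t) (b - t / p) <= f a b - t * g0) ->
  (forall t, 0 < t -> t <= a -> f (a - t) (b + t / p) <= f a b + t * C) ->
  exists q, 0 < q < 1 /\ price_supports q.
Proof.
  intros HT Hg0 HC Hloss Hgainbd.
  destruct (no_gains_up_near_one T g0 HT Hg0 Hloss) as (qA & HqA & HnoA).
  destruct (no_gains_down_near_zero C HC Hgainbd) as (qB & HqB & HnoB).
  set (E := fun q => 0 < q /\ (q <= qB \/ gains_up q)).
  assert (HEbound : is_upper_bound E (Rmax qA qB)).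
  { intros q (Hq & [HqqB|Hup]).
    - eapply Rle_trans; [exact HqqB | apply Rmax_r].
    - eapply Rle_trans; [|apply Rmax_l].
      destruct (Rle_dec q qA) as [|HqqA]; [assumption|].
      exfalso. apply (HnoA q); [lra | exact Hup]. }
  assert (HqBE : E qB) by (split; [lra | left; lra]).
  destruct (completeness E (ex_intro _ _ HEbound) (ex_intro _ _ HqBE)) as (s & Hub & Hlub).
  assert (HqBs : qB <= s) by (apply Hub, HqBE).
  assert (Hs1 : s < 1).
  { apply Rle_lt_trans with (Rmax qA qB); [apply Hlub, HEbound | apply Rmax_lub_lt; lra]. }
  exists s. split; [lra|]. apply price_supports_of_no_gains.
  - intros Hup. destruct (gains_up_open s ltac:(lra) Hup) as (e & He & Hup').
    assert (s + e <= s) by (apply Hub; split; [lra | right; exact Hup']). lra.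
  - intros Hdown. destruct (gains_down_open s ltac:(lra) Hdown) as (e & He & Hdown').
    assert (Hbound : is_upper_bound E (s - e)).
    { intros q (Hq & Hcase). destruct (Rle_dec q (s - e)) as [|Hgt]; [assumption|].
      assert (Hdq : gains_down q) by (apply (gains_down_monotone (s - e)); [lra | lra | exact Hdown']).
      exfalso. destruct Hcase as [HqqB|Hup].
      - exact (HnoB q Hq HqqB Hdq).
      - exact (gains_up_down_disjoint q ltac:(lra) Hup Hdq). }
    specialize (Hlub _ Hbound). lra.
Qed.

End SupportingPrice.

Definition upd {A : Type} (f : nat -> A) (i : nat) (v : A) : nat -> A :=
  fun l => if Nat.eqb l i then v else f l.

Lemma upd_same {A : Type} (f : nat -> A) i v : upd f i v i = v.
Proof. unfold upd. now rewrite Nat.eqb_refl. Qed.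

Lemma upd_other {A : Type} (f : nat -> A) i v l : l <> i -> upd f i v l = f l.
Proof. intros Hli. unfold upd. destruct (Nat.eqb_spec l i); [contradiction | reflexivity]. Qed.

Definition payoff n (U : nat -> R -> R -> R) (x y : nat -> R) (g : nat -> nat -> bool) i : R :=
  util n U x i (x i) (y i) (g i).

Definition spending n (p : nat -> R) (k : R) (x y : nat -> R) (g : nat -> nat -> bool) i : R :=
  x i + p i * y i + nlinks n (g i) * k.

Lemma welfare_payoff n U x y g : welfare n U x y g = sumN n (payoff n U x y g).
Proof. reflexivity. Qed.

Lemma agg_feasible_spending n p w k x y g :
  agg_feasible n p w k x y g = (sumN n (spending n p k x y g) <= sumN n w).
Proof. reflexivity. Qed.

Lemma util_ext n U x x' i a b gl : (forall m, (m < n)%nat -> gl m = true -> x' m = x m) ->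
  util n U x' i a b gl = util n U x i a b gl.
Proof.
  intros Hx. unfold util. f_equal. f_equal. apply sumN_ext.
  intros m Hm. destruct (gl m) eqn:Hglm; [apply Hx|]; auto.
Qed.

Lemma sumN_links_nonneg n (gl : nat -> bool) v : (forall m, (m < n)%nat -> 0 <= v m) ->
  0 <= sumN n (fun m => if gl m then v m else 0).
Proof.
  intros Hv. apply Rle_trans with (sumN n (fun _ => 0)); [right; symmetry; now apply sumN_zero|].
  apply sumN_le. intros m Hm. destruct (gl m); [apply Hv; auto | lra].
Qed.

Definition links_only_to n (gl : nat -> bool) h := forall m, (m < n)%nat -> gl m = true -> m = h.

Definition link_to (h : nat) : nat -> bool := fun m => Nat.eqb m h.

Lemma link_to_self h : link_to h h = true.
Proof. apply Nat.eqb_refl. Qed.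

Lemma link_to_other h m : m <> h -> link_to h m = false.
Proof. apply Nat.eqb_neq. Qed.

Lemma links_only_to_link_to n h : links_only_to n (link_to h) h.
Proof. intros m _ Hm. now apply Nat.eqb_eq. Qed.

Section LinksOnlyTo.

Variables (n h : nat) (gl : nat -> bool).
Hypothesis h_lt : (h < n)%nat.
Hypothesis gl_only_h : links_only_to n gl h.

Lemma sumN_links_only_to v : sumN n (fun m => if gl m then v m else 0) = if gl h then v h else 0.
Proof.
  apply (sumN_single n (fun m => if gl m then v m else 0) h h_lt).
  intros m Hm Hmh. destruct (gl m) eqn:Hglm; [|reflexivity].
  exfalso. exact (Hmh (gl_only_h m Hm Hglm)).
Qed.

Lemma util_links_only_to U v i a b : util n U v i a b gl = U i (a + if gl h then v h else 0) b.
Proof. unfold util. now rewrite sumN_links_only_to. Qed.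

Lemma nlinks_links_only_to : nlinks n gl = if gl h then 1 else 0.
Proof. apply (sumN_links_only_to (fun _ => 1)). Qed.

End LinksOnlyTo.

Section Efficiency.

Variables (n : nat) (U : nat -> R -> R -> R) (p w : nat -> R) (k : R).
Variables (x y : nat -> R) (g : nat -> nat -> bool).
Hypothesis p_pos : forall i, (i < n)%nat -> 0 < p i.
Hypothesis U_concave : forall i, (i < n)%nat -> strictly_concave (U i).
Hypothesis U_increasing : forall i, (i < n)%nat -> increasing2 (U i).
Hypothesis efficient : is_efficient n U p w k x y g.

Lemma efficient_no_pareto_improvement x' y' g' i :
  admissible n x' y' g' -> agg_feasible n p w k x' y' g' -> (i < n)%nat ->
  (forall l, (l < n)%nat -> l <> i -> payoff n U x y g l <= payoff n U x' y' g' l) ->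
  payoff n U x' y' g' i <= payoff n U x y g i.
Proof.
  intros Hadm Hagg Hi Hothers.
  destruct (Rle_lt_dec (payoff n U x' y' g' i) (payoff n U x y g i)) as [|Hgain]; [assumption|].
  exfalso. destruct efficient as (_ & _ & Hopt).
  specialize (Hopt x' y' g' Hadm Hagg). rewrite !welfare_payoff in Hopt.
  enough (sumN n (payoff n U x y g) < sumN n (payoff n U x' y' g')) by lra.
  apply (sumN_lt n _ _ i); [|exact Hi | exact Hgain].
  intros l Hl. destruct (Nat.eq_dec l i) as [->|Hli]; [lra | auto].
Qed.

Lemma agg_feasible_update2 x' y' g' i j : (i < n)%nat -> (j < n)%nat -> i <> j ->
  (forall l, (l < n)%nat -> l <> i -> l <> j -> spending n p k x' y' g' l = spending n p k x y g l) ->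
  spending n p k x' y' g' i + spending n p k x' y' g' j
    <= spending n p k x y g i + spending n p k x y g j ->
  agg_feasible n p w k x' y' g'.
Proof.
  intros Hi Hj Hij Hoff Hpair. destruct efficient as (_ & Hagg & _).
  rewrite agg_feasible_spending in *.
  rewrite (sumN_update2 n (spending n p k x y g) _ i j Hi Hj Hij Hoff).
  lra.
Qed.

Lemma efficient_unilateral i xi yi gi :
  (i < n)%nat -> 0 <= xi -> 0 <= yi -> gi i = false ->
  (forall l, (l < n)%nat -> g l i = true -> xi = x i) ->
  xi + p i * yi + nlinks n gi * k - spending n p k x y g i
    <= sumN n w - sumN n (spending n p k x y g) ->
  util n U x i xi yi gi <= payoff n U x y g i.
Proof.
  intros Hi Hxi Hyi Hgii Hunseen Hslack.
  destruct efficient as (Hadm & _ & _).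
  set (x' := upd x i xi). set (y' := upd y i yi). set (g' := upd g i gi).
  assert (Hself : payoff n U x' y' g' i = util n U x i xi yi gi).
  { unfold payoff, x', y', g'. rewrite !upd_same. apply util_ext.
    intros m _ Hgim. apply upd_other. intros ->. congruence. }
  rewrite <- Hself. apply efficient_no_pareto_improvement; [| |exact Hi|].
  - intros l Hl. unfold x', y', g'. destruct (Nat.eq_dec l i) as [->|Hli].
    + rewrite !upd_same. auto.
    + rewrite !upd_other by exact Hli. apply Hadm, Hl.
  - rewrite agg_feasible_spending.
    rewrite (sumN_update n (spending n p k x y g) _ i Hi).
    + enough (spending n p k x' y' g' i = xi + p i * yi + nlinks n gi * k) by lra.
      unfold spending, x', y', g'. now rewrite !upd_same.
    + intros l _ Hli. unfold spending, x', y', g'. now rewrite !upd_other by exact Hli.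
  - intros l Hl Hli. unfold payoff, x', y', g'. rewrite !upd_other by exact Hli.
    right. symmetry. apply util_ext. intros m Hm Hglm.
    destruct (Nat.eq_dec m i) as [->|Hmi].
    + rewrite upd_same. exact (Hunseen l Hl Hglm).
    + apply upd_other, Hmi.
Qed.

Lemma efficient_budget_binds : (0 < n)%nat -> sumN n (spending n p k x y g) = sumN n w.
Proof.
  intros Hn. set (i := 0%nat) in Hn.
  destruct efficient as (Hadm & Hagg & _). rewrite agg_feasible_spending in Hagg.
  destruct (Rle_lt_or_eq_dec _ _ Hagg) as [Hslack|]; [exfalso|assumption].
  set (d := sumN n w - sumN n (spending n p k x y g)).
  destruct (Hadm i Hn) as (Hxi & Hyi & Hgii). pose proof (p_pos i Hn) as Hpi.
  assert (Hd : 0 < d / p i) by (apply Rdiv_lt_0_compat; unfold d; lra).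
  pose proof (efficient_unilateral i (x i) (y i + d / p i) (g i) Hn Hxi ltac:(lra) Hgii
    (fun _ _ _ => eq_refl)) as Hdev.
  assert (Hmore : payoff n U x y g i < util n U x i (x i) (y i + d / p i) (g i)).
  { apply (proj2 (U_increasing i Hn)); [|lra|lra].
    pose proof (sumN_links_nonneg n (g i) x (fun m Hm => proj1 (Hadm m Hm))). lra. }
  enough (util n U x i (x i) (y i + d / p i) (g i) <= payoff n U x y g i) by lra.
  apply Hdev.
  assert (spending n p k x y g i = x i + p i * y i + nlinks n (g i) * k) by reflexivity.
  replace (p i * (y i + d / p i)) with (p i * y i + d) by (field; lra).
  unfold d. lra.
Qed.

Section Star.

Variable h : nat.
Hypothesis k_pos : 0 < k.
Hypothesis star : star_hub n g h.

Lemma hub_lt : (h < n)%nat.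
Proof. exact (proj1 star). Qed.

Lemma links_only_to_hub l : (l < n)%nat -> links_only_to n (g l) h.
Proof. intros Hl m Hm Hglm. exact (proj2 (proj2 star) l m Hl Hm Hglm). Qed.

Lemma hub_links_none m : (m < n)%nat -> g h m = false.
Proof.
  intros Hm. destruct (g h m) eqn:Hghm; [|reflexivity].
  pose proof (links_only_to_hub h hub_lt m Hm Hghm) as ->.
  destruct efficient as (Hadm & _). destruct (Hadm h hub_lt) as (_ & _ & Hghh). congruence.
Qed.

Lemma spoke_exists : exists i, (i < n)%nat /\ i <> h /\ g i h = true.
Proof.
  destruct star as (_ & (i & Hi & Hgih) & _). exists i. repeat split; auto.
  intros ->. rewrite hub_links_none in Hgih by exact hub_lt. discriminate.
Qed.

Lemma payoff_star x' y' g' l : links_only_to n (g' l) h ->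
  payoff n U x' y' g' l = U l (x' l + if g' l h then x' h else 0) (y' l).
Proof. intros Honly. exact (util_links_only_to n h (g' l) hub_lt Honly U x' l (x' l) (y' l)). Qed.

Lemma nlinks_star l : (l < n)%nat -> nlinks n (g l) = if g l h then 1 else 0.
Proof. intros Hl. exact (nlinks_links_only_to n h (g l) hub_lt (links_only_to_hub l Hl)). Qed.

Lemma nonhub_best_response i xi yi gi :
  (i < n)%nat -> i <> h -> 0 <= xi -> 0 <= yi -> gi i = false ->
  xi + p i * yi + nlinks n gi * k <= spending n p k x y g i ->
  util n U x i xi yi gi <= payoff n U x y g i.
Proof.
  intros Hi Hih Hxi Hyi Hgii Hbud.
  apply efficient_unilateral; auto.
  - intros l Hl Hgli. exfalso. exact (Hih (links_only_to_hub l Hl i Hi Hgli)).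
  - destruct efficient as (_ & Hagg & _). rewrite agg_feasible_spending in Hagg. lra.
Qed.

(* Otherwise a spoke would rather provide [x h] herself and save the link. *)
Lemma hub_provision_ge_k : k <= x h.
Proof.
  destruct spoke_exists as (i & Hi & Hih & Hgih).
  destruct efficient as (Hadm & _ & _). destruct (Hadm i Hi) as (Hxi & Hyi & Hgii).
  destruct (Hadm h hub_lt) as (Hxh & _ & _). pose proof (p_pos i Hi) as Hpi.
  destruct (Rle_lt_dec k (x h)) as [|Hlt]; [assumption|exfalso].
  set (yi := y i + (k - x h) / p i).
  assert (Hmore : y i < yi)
    by (unfold yi; assert (0 < (k - x h) / p i) by (apply Rdiv_lt_0_compat; lra); lra).
  assert (Hnone : links_only_to n (fun _ => false) h) by discriminate.
  pose proof (nonhub_best_response i (x i + x h) yi (fun _ => false) Hi Hih ltac:(lra) ltac:(lra)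
    eq_refl) as Hbr.
  rewrite (util_links_only_to n h _ hub_lt Hnone), (nlinks_links_only_to n h _ hub_lt Hnone) in Hbr.
  rewrite (payoff_star x y g i (links_only_to_hub i Hi)), Hgih in Hbr.
  assert (Hsp : spending n p k x y g i = x i + p i * y i + k)
    by (unfold spending; rewrite (nlinks_star i Hi), Hgih; ring).
  assert (Hcost : p i * yi = p i * y i + k - x h) by (unfold yi; field; lra).
  assert (Hgain : U i (x i + x h) (y i) < U i (x i + x h + 0) yi)
    by (rewrite Rplus_0_r; apply (proj2 (U_increasing i Hi)); lra).
  specialize (Hbr ltac:(lra)). lra.
Qed.

(* Player [j] stops providing and links to the hub, whose provision rises to [X]. *)
Lemma hub_takeover j X : (j < n)%nat -> j <> h -> x h < X ->
  x j + (if g j h then x h else 0) <= X ->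
  k + X <= x h + x j + nlinks n (g j) * k -> False.
Proof.
  intros Hj Hjh HX Hcons Hcost.
  destruct efficient as (Hadm & _). pose proof hub_lt as Hh.
  set (x' := upd (upd x j 0) h X). set (g' := upd g j (link_to h)).
  assert (Hx'h : x' h = X) by apply upd_same.
  assert (Hx'j : x' j = 0) by (unfold x'; rewrite upd_other, upd_same; auto).
  assert (Hx'l : forall l, l <> j -> l <> h -> x' l = x l)
    by (intros; unfold x'; rewrite !upd_other; auto).
  assert (Hg'j : g' j = link_to h) by apply upd_same.
  assert (Hg'l : forall l, l <> j -> g' l = g l) by (intros; apply upd_other; auto).
  assert (Honly' : forall l, (l < n)%nat -> links_only_to n (g' l) h).
  { intros l Hl. destruct (Nat.eq_dec l j) as [->|Hlj].
    - rewrite Hg'j. apply links_only_to_link_to.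
    - rewrite Hg'l by exact Hlj. apply links_only_to_hub, Hl. }
  assert (Hhh : g h h = false) by (apply hub_links_none, Hh).
  destruct (Hadm h Hh) as (Hxh & Hyh & _).
  assert (Hgain : payoff n U x y g h < payoff n U x' y g' h).
  { rewrite (payoff_star x' y g' h (Honly' h Hh)), (payoff_star x y g h (links_only_to_hub h Hh)).
    rewrite Hg'l, Hhh, Hx'h by auto. apply (proj1 (U_increasing h Hh)); lra. }
  apply (Rlt_not_le _ _ Hgain), efficient_no_pareto_improvement; [| |exact Hh|].
  - intros l Hl. destruct (Hadm l Hl) as (Hxl & Hyl & Hgll).
    destruct (Nat.eq_dec l j) as [->|Hlj].
    { rewrite Hx'j, Hg'j, link_to_other; repeat split; auto; lra. }
    destruct (Nat.eq_dec l h) as [->|Hlh].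
    { rewrite Hx'h, Hg'l; repeat split; auto; lra. }
    rewrite Hx'l, Hg'l; auto.
  - apply (agg_feasible_update2 x' y g' j h Hj Hh Hjh).
    + intros l _ Hlj Hlh. unfold spending. rewrite Hx'l, Hg'l; auto.
    + unfold spending.
      rewrite Hx'j, Hx'h, Hg'j, Hg'l, (nlinks_links_only_to n h _ Hh (links_only_to_link_to n h)),
        link_to_self by auto.
      lra.
  - intros l Hl Hlh. destruct (Hadm l Hl) as (Hxl & Hyl & _).
    rewrite (payoff_star x y g l (links_only_to_hub l Hl)), (payoff_star x' y g' l (Honly' l Hl)),
      Hx'h.
    destruct (Nat.eq_dec l j) as [->|Hlj].
    + rewrite Hx'j, Hg'j, link_to_self. apply increasing_x_le; auto; [|lra]. destruct (g j h); lra.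
    + rewrite Hx'l, Hg'l by auto. destruct (g l h); apply increasing_x_le; auto; lra.
Qed.

Lemma spoke_provision_zero j : (j < n)%nat -> g j h = true -> x j = 0.
Proof.
  intros Hj Hgjh. destruct efficient as (Hadm & _). destruct (Hadm j Hj) as (Hxj & _).
  assert (Hjh : j <> h) by (intros ->; rewrite hub_links_none in Hgjh by exact hub_lt; discriminate).
  destruct Hxj as [Hpos|]; [exfalso|auto].
  apply (hub_takeover j (x h + x j) Hj Hjh); rewrite ?(nlinks_star j Hj), ?Hgjh; lra.
Qed.

Lemma nonhub_provision_le_k j : (j < n)%nat -> j <> h -> x j <= k.
Proof.
  intros Hj Hjh.
  destruct (g j h) eqn:Hgjh; [rewrite (spoke_provision_zero j Hj Hgjh); lra|].
  destruct (Rle_lt_dec (x j) k) as [|Hgt]; [assumption|exfalso].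
  destruct efficient as (Hadm & _). destruct (Hadm j Hj) as (Hxj & Hyj & _).
  assert (Hsp : spending n p k x y g j = x j + p j * y j)
    by (unfold spending; rewrite (nlinks_star j Hj), Hgjh; ring).
  destruct (Rle_lt_dec (x j) (x h)) as [Hle|Hlt].
  - (* [j] stops providing and links to the hub instead. *)
    pose proof (p_pos j Hj) as Hpj.
    set (yj := y j + (x j - k) / p j).
    assert (Hmore : y j < yj)
      by (unfold yj; assert (0 < (x j - k) / p j) by (apply Rdiv_lt_0_compat; lra); lra).
    assert (Hcost : p j * yj = p j * y j + x j - k) by (unfold yj; field; lra).
    pose proof (links_only_to_link_to n h) as Honly.
    pose proof (nonhub_best_response j 0 yj (link_to h) Hj Hjh (Rle_refl 0) ltac:(lra)
      (link_to_other h j Hjh)) as Hbr.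
    rewrite (util_links_only_to n h _ hub_lt Honly), (nlinks_links_only_to n h _ hub_lt Honly),
      link_to_self in Hbr.
    rewrite (payoff_star x y g j (links_only_to_hub j Hj)), Hgjh in Hbr.
    specialize (Hbr ltac:(lra)).
    assert (U j (x j + 0) (y j) < U j (x j + 0) yj) by (apply (proj2 (U_increasing j Hj)); lra).
    assert (U j (x j + 0) yj <= U j (0 + x h) yj) by (apply increasing_x_le; auto; lra).
    lra.
  - pose proof hub_provision_ge_k.
    apply (hub_takeover j (x j) Hj Hjh Hlt); rewrite ?(nlinks_star j Hj), ?Hgjh; lra.
Qed.

Lemma links_provision_le gi : gi h = false ->
  sumN n (fun j => if gi j then x j else 0) <= nlinks n gi * k.
Proof.
  intros Hgih. unfold nlinks. rewrite Rmult_comm, <- sumN_scal.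
  apply sumN_le. intros j Hj. destruct (gi j) eqn:Hgij; [|lra].
  rewrite Rmult_1_r. apply nonhub_provision_le_k; [exact Hj|]. intros ->. congruence.
Qed.

Definition spill s l :=
  U l (x l + if g l h then x h + s else 0) (y l) - U l (x l + if g l h then x h else 0) (y l).

Definition spillover s := sumN n (spill s).

Lemma hub_tradeoff s : - x h <= s -> 0 <= y h - s / p h ->
  U h (x h + s) (y h - s / p h) - U h (x h) (y h) + spillover s <= 0.
Proof.
  intros Hs Hys. pose proof hub_lt as Hh. destruct efficient as (Hadm & Hagg & Hopt).
  set (x' := upd x h (x h + s)). set (y' := upd y h (y h - s / p h)).
  assert (Hhh : g h h = false) by (apply hub_links_none, Hh).
  assert (Hwelfare : welfare n U x' y' g <= welfare n U x y g).
  { apply Hopt.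
    - intros l Hl. unfold x', y'. destruct (Nat.eq_dec l h) as [->|Hlh].
      + rewrite !upd_same. repeat split; auto. lra.
      + rewrite !upd_other by exact Hlh. apply Hadm, Hl.
    - rewrite agg_feasible_spending in *. rewrite (sumN_ext n _ (spending n p k x y g)); [exact Hagg|].
      intros l Hl. unfold spending, x', y'. destruct (Nat.eq_dec l h) as [->|Hlh].
      + rewrite !upd_same. pose proof (p_pos h Hh). field. lra.
      + rewrite !upd_other by exact Hlh. reflexivity. }
  rewrite !welfare_payoff in Hwelfare.
  rewrite (sumN_update n (fun l => payoff n U x y g l + spill s l) _ h Hh), sumN_plus in Hwelfare.
  - assert (Hspill_h : spill s h = 0) by (unfold spill; rewrite Hhh; ring).
    assert (Hpay'_h : payoff n U x' y' g h = U h (x h + s) (y h - s / p h)).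
    { rewrite (payoff_star x' y' g h (links_only_to_hub h Hh)), Hhh. unfold x', y'.
      rewrite !upd_same. f_equal. ring. }
    assert (Hpay_h : payoff n U x y g h = U h (x h) (y h)).
    { rewrite (payoff_star x y g h (links_only_to_hub h Hh)), Hhh. f_equal. ring. }
    unfold spillover. lra.
  - intros l Hl Hlh. unfold spill.
    rewrite (payoff_star x' y' g l (links_only_to_hub l Hl)),
      (payoff_star x y g l (links_only_to_hub l Hl)).
    unfold x', y'. rewrite (upd_other x h _ l Hlh), (upd_other y h _ l Hlh), upd_same. ring.
Qed.

Lemma spillover_concave s lam : - x h <= s -> 0 <= lam <= 1 ->
  lam * spillover s <= spillover (lam * s).
Proof.
  intros Hs Hlam. unfold spillover. rewrite <- sumN_scal.
  apply sumN_le. intros l Hl. unfold spill.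
  destruct efficient as (Hadm & _). destruct (Hadm l Hl) as (Hxl & Hyl & _).
  destruct (Hadm h hub_lt) as (Hxh & _). destruct (g l h); [|lra].
  pose proof (concave_comb (U l) (U_concave l Hl) (x l + (x h + s)) (y l) (x l + x h) (y l) lam
    ltac:(lra) Hyl ltac:(lra) Hyl Hlam) as Hcomb.
  replace (lam * (x l + (x h + s)) + (1 - lam) * (x l + x h)) with (x l + (x h + lam * s)) in Hcomb
    by ring.
  replace (lam * y l + (1 - lam) * y l) with (y l) in Hcomb by ring.
  lra.
Qed.

Lemma spillover_pos : 0 < spillover 1.
Proof.
  destruct spoke_exists as (i & Hi & Hih & Hgih). destruct efficient as (Hadm & _).
  destruct (Hadm h hub_lt) as (Hxh & _).
  apply Rle_lt_trans with (sumN n (fun _ => 0)); [right; symmetry; now apply sumN_zero|].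
  apply (sumN_lt n _ _ i); [|exact Hi|].
  - intros l Hl. unfold spill. destruct (Hadm l Hl) as (Hxl & Hyl & _). destruct (g l h); [|lra].
    assert (U l (x l + x h) (y l) <= U l (x l + (x h + 1)) (y l))
      by (apply increasing_x_le; auto; lra).
    lra.
  - unfold spill. rewrite Hgih. destruct (Hadm i Hi) as (Hxi & Hyi & _).
    assert (U i (x i + x h) (y i) < U i (x i + (x h + 1)) (y i))
      by (apply (proj1 (U_increasing i Hi)); lra).
    lra.
Qed.

Lemma spillover_at_zero_provision : spillover (- x h) <= 0.
Proof.
  destruct efficient as (Hadm & _). destruct (Hadm h hub_lt) as (Hxh & _).
  apply Rle_trans with (sumN n (fun _ => 0)); [|right; now apply sumN_zero].
  apply sumN_le. intros l Hl. unfold spill. destruct (Hadm l Hl) as (Hxl & Hyl & _).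
  destruct (g l h); [|lra].
  assert (U l (x l + (x h + - x h)) (y l) <= U l (x l + x h) (y l))
    by (apply increasing_x_le; auto; lra).
  lra.
Qed.

(* Along the aggregate budget line the hub loses at least what the spokes gain, and the spokes'
   gain is concave in the change [s] of the hub's provision. *)
Lemma hub_supporting_price : exists q, 0 < q < 1 /\ price_supports (U h) (x h) (y h) (p h) q.
Proof.
  pose proof hub_lt as Hh. destruct efficient as (Hadm & _). destruct (Hadm h Hh) as (Hxh & Hyh & _).
  pose proof hub_provision_ge_k as Hxk. pose proof (p_pos h Hh) as Hph.
  pose proof spillover_pos as Hpos. pose proof spillover_at_zero_provision as Hzero.
  apply (supporting_price_exists (U h) (x h) (y h) (p h) (U_concave h Hh) (U_increasing h Hh)
    ltac:(lra) Hyh Hph 1 (spillover 1) (- spillover (- x h) / x h)); [lra | lra | | |].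
  - apply Rdiv_le_0_compat; lra.
  - intros t Ht Ht1 Hyt.
    pose proof (hub_tradeoff t ltac:(lra) Hyt) as Htrade.
    pose proof (spillover_concave 1 t ltac:(lra) ltac:(lra)) as Hconc.
    rewrite Rmult_1_r in Hconc. lra.
  - intros t Ht Hta.
    assert (Hyt : 0 <= y h - - t / p h).
    { replace (y h - - t / p h) with (y h + t / p h) by (field; lra).
      assert (0 < t / p h) by (apply Rdiv_lt_0_compat; lra). lra. }
    pose proof (hub_tradeoff (- t) ltac:(lra) Hyt) as Htrade.
    replace (x h + - t) with (x h - t) in Htrade by ring.
    replace (y h - - t / p h) with (y h + t / p h) in Htrade by (field; lra).
    assert (Hlam : 0 <= t / x h <= 1).
    { assert (Hdiv : t / x h * x h = t) by (field; lra).
      split; [apply Rdiv_le_0_compat|]; nra. }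
    pose proof (spillover_concave (- x h) (t / x h) ltac:(lra) Hlam) as Hconc.
    replace (t / x h * - x h) with (- t) in Hconc by (field; lra).
    replace (t * (- spillover (- x h) / x h)) with (- (t / x h * spillover (- x h))) by (field; lra).
    lra.
Qed.

(* A link costs the hub [k] and brings her at most [k] of public good, so at a price [q < 1]
   she does no better through links than by providing herself: she stays on or below her
   supporting line. *)
Lemma hub_best_response q xi yi gi : 0 < q < 1 -> price_supports (U h) (x h) (y h) (p h) q ->
  0 <= xi -> 0 <= yi -> gi h = false ->
  q * xi + p h * yi + nlinks n gi * k = q * x h + p h * y h ->
  util n U x h xi yi gi <= payoff n U x y g h.
Proof.
  intros Hq Hsupp Hxi Hyi Hgih Hbud.
  pose proof hub_lt as Hh. destruct efficient as (Hadm & _). pose proof (p_pos h Hh) as Hph.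
  rewrite (payoff_star x y g h (links_only_to_hub h Hh)), hub_links_none, Rplus_0_r by exact Hh.
  unfold util. set (S := sumN n (fun j => if gi j then x j else 0)).
  assert (HS0 : 0 <= S) by (apply sumN_links_nonneg; intros m Hm; apply (Hadm m Hm)).
  assert (HSk : S <= nlinks n gi * k) by (apply links_provision_le, Hgih).
  set (t := xi + S - x h).
  assert (Hyline : yi <= y h - q * t / p h).
  { apply (Rmult_le_reg_l (p h)); [exact Hph|].
    replace (p h * (y h - q * t / p h)) with (p h * y h - q * t) by (field; lra).
    assert (q * S <= S) by nra. unfold t. lra. }
  apply Rle_trans with (U h (x h + t) (y h - q * t / p h)).
  - replace (xi + S) with (x h + t) by (unfold t; ring).
    apply increasing_y_le; [apply U_increasing, Hh | unfold t; lra | lra | exact Hyline].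
  - apply Hsupp; [unfold t; lra | lra].
Qed.

Definition policy_price q i := if Nat.eqb i h then q else 1.

Definition policy_tax q i := w i - (policy_price q i * x i + p i * y i + nlinks n (g i) * k).

Lemma policy_tax_sum q : sumN n (policy_tax q) = (1 - q) * x h.
Proof.
  pose proof hub_lt as Hh. unfold policy_tax. rewrite sumN_minus.
  rewrite (sumN_update n (spending n p k x y g)
    (fun i => policy_price q i * x i + p i * y i + nlinks n (g i) * k) h Hh).
  - rewrite efficient_budget_binds by lia. unfold spending, policy_price. rewrite Nat.eqb_refl. ring.
  - intros j _ Hjh. unfold spending, policy_price. destruct (Nat.eqb_spec j h); [contradiction | ring].
Qed.

Lemma policy_equilibrium q : 0 < q < 1 -> price_supports (U h) (x h) (y h) (p h) q ->
  is_NE n U p k (policy_price q) (fun i => w i - policy_tax q i) x y g.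
Proof.
  intros Hq Hsupp i Hi. destruct efficient as (Hadm & _). destruct (Hadm i Hi) as (Hxi & Hyi & Hgii).
  split.
  - repeat split; auto. unfold policy_tax. ring.
  - intros xi yi gi (Hxi' & Hyi' & Hgii' & Hbud). cbv beta in Hbud.
    unfold policy_tax, policy_price in Hbud.
    change (util n U x i xi yi gi <= payoff n U x y g i).
    destruct (Nat.eqb_spec i h) as [->|Hih].
    + apply (hub_best_response q); auto.
      rewrite (nlinks_star h hub_lt), hub_links_none in Hbud by exact hub_lt. lra.
    + apply nonhub_best_response; auto. unfold spending. lra.
Qed.

End Star.

End Efficiency.

Theorem proposition9
  (n : nat) (U : nat -> R -> R -> R) (w p : nat -> R) (k : R)
  (gam : nat -> R -> R)
  (Hk : 0 < k)
  (Hw : forall i, (i < n)%nat -> 0 < w i)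
  (Hp : forall i, (i < n)%nat -> 0 < p i)
  (HU2 : forall i, (i < n)%nat -> C2_pos (U i))
  (HUc : forall i, (i < n)%nat -> strictly_concave (U i))
  (HUi : forall i, (i < n)%nat -> increasing2 (U i))
  (Hgam : forall i, (i < n)%nat -> is_engel (U i) (p i) (gam i))
  (Hgam' : forall i, (i < n)%nat -> C1_slope01 (gam i))
  (HNE : exists xs ys gs,
      is_sociable_NE n U p k (fun _ => 1) w xs ys gs /\ nonempty_net n gs) :
  forall (xe ye : nat -> R) (ge : nat -> nat -> bool) (h : nat),
    is_efficient n U p w k xe ye ge ->
    star_hub n ge h ->
    exists (px : R) (tau : nat -> R),
      0 < px < 1 /\
      sumN n tau = (1 - px) * xe h /\
      is_NE n U p k (fun i => if Nat.eqb i h then px else 1)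
                    (fun i => w i - tau i) xe ye ge.
Proof.
  intros xe ye ge h Heff Hstar.
  destruct (hub_supporting_price n U p w k xe ye ge Hp HUc HUi Heff h Hk Hstar) as (q & Hq & Hsupp).
  exists q, (policy_tax n p w k xe ye ge h q).
  split; [exact Hq | split].
  - exact (policy_tax_sum n U p w k xe ye ge Hp HUi Heff h Hstar q).
  - exact (policy_equilibrium n U p w k xe ye ge Hp HUi Heff h Hk Hstar q Hq Hsupp).
Qed.
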